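(* Let $G=(V,E)$ be a bispanning graph, $G'=(V',E')\subseteq G$ a subgraph which is itself bispanning, and $\overline{G}=(\overline V,\overline E)=G/G'$. (i) If $E=S\,\dot\cup\,T$ with $S,T$ disjoint spanning trees of $G$, then $S\cap E'$ and $T\cap E'$ are disjoint spanning trees of $G'$, and $S\cap\overline E$ and $T\cap\overline E$ are disjoint spanning trees of $\overline G$. (ii) If $S',T'$ are two disjoint spanning trees of $G'$ and $\overline S,\overline T$ are two disjoint spanning trees of $\overline G$, then $S'\,\dot\cup\,\overline S$ and $T'\,\dot\cup\,\overline T$ are two disjoint spanning trees of $G$.
   Context: Graphs are finite, undirected, may have parallel edges, no loops. A spanning tree of $H$ is an edge set $T$ such that $(V(H),T)$ is connected and acyclic; $H$ is bispanning if its edge set is the union of two disjoint spanning trees. The contraction $G/G'$ replaces all vertices of $V'$ by one new vertex, deletes all edges with both ends in $V'$, and makes every other edge with an end in $V'$ incident to the new vertex; its edges are identified with the corresponding edges of $G$. *)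

(* Multigraphs inside ambient finite types:
   V = type of vertices, E = type of edge names, ends : E -> V * V gives the
   two endpoints of each edge (parallel edges allowed: distinct edge names
   may have the same ends). *)
From mathcomp Require Import all_boot.
Set Implicit Arguments. Unset Strict Implicit. Unset Printing Implicit Defensive.

Section Graphs.
Variables (V E : finType) (ends : E -> V * V).

Definition joins (e : E) (x y : V) : bool :=
  (ends e == (x, y)) || (ends e == (y, x)).

Definition is_graph (VS : {set V}) (ES : {set E}) : Prop :=
  forall e, e \in ES ->
    [/\ (ends e).1 \in VS, (ends e).2 \in VS & (ends e).1 != (ends e).2].

Definition adj (T : {set E}) : rel V :=
  fun x y => [exists e in T, joins e x y].

Definition connected (VS : {set V}) (T : {set E}) : Prop :=
  VS != set0 /\
  forall x y, x \in VS -> y \in VS -> connect (adj T) x y.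

(* a cycle of length k.+1 in T: distinct edges es i, distinct vertices vs i,
   es i joining vs i and vs (i+1 mod k.+1).  (Length 2 = parallel edges.) *)
Definition has_cycle (T : {set E}) : Prop :=
  exists (k : nat) (es : 'I_k.+1 -> E) (vs : 'I_k.+1 -> V),
    [/\ injective es, injective vs &
        forall i, es i \in T /\ joins (es i) (vs i) (vs (ordS i))].

Definition acyclic (T : {set E}) : Prop := ~ has_cycle T.

Definition spanning_tree (VS : {set V}) (ES : {set E}) (T : {set E}) : Prop :=
  [/\ T \subset ES, connected VS T & acyclic T].

Definition bispanning (VS : {set V}) (ES : {set E}) : Prop :=
  is_graph VS ES /\
  exists S T : {set E},
    [/\ spanning_tree VS ES S, spanning_tree VS ES T,
        [disjoint S & T] & S :|: T = ES].

End Graphs.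

(* Contraction G / G' where G' has vertex set V': vertices of V' become the
   single new vertex None, other vertices v become Some v; edges with both
   ends in V' are deleted, the other edges keep their names. *)
Section Contraction.
Variables (V E : finType) (ends : E -> V * V) (V' : {set V}).

Definition cvert (v : V) : option V := if v \in V' then None else Some v.

Definition cends (e : E) : option V * option V :=
  (cvert (ends e).1, cvert (ends e).2).

Definition cverts (VS : {set V}) : {set option V} :=
  None |: (Some @: (VS :\: V')).

Definition cedges (ES : {set E}) : {set E} :=
  ES :\: [set e | ((ends e).1 \in V') && ((ends e).2 \in V')].

End Contraction.

(* Count edges against components: if the edges T stay inside the vertex set
   VS, then #|T| + #(components of (VS, T)) >= #|VS|, with equality exactly
   when T is acyclic.  Hence a bispanning graph has 2(|VS| - 1) edges, and two
   acyclic sets partitioning its edges both have |VS| - 1 edges, so both are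
   spanning trees; this gives S :&: E' and T :&: E' in (i).  An edge of S with
   both ends in V' then lies in E', since it would close a cycle with the tree
   S :&: E'.  So S keeps exactly the edges S :\: E' in G/G'; they connect the
   contraction and number |VS| - |V'| = #|cverts V' VS| - 1, hence form a tree.
   In (ii), a walk of G/G' through the new vertex lifts to G by crossing V'
   along S', so S' :|: Sb is connected, with (|V'| - 1) + (|VS| - |V'|) edges. *)

From mathcomp Require Import all_boot zify.
Set Implicit Arguments. Unset Strict Implicit. Unset Printing Implicit Defensive.

Lemma setU1_ind (T : finType) (P : {set T} -> Prop) :
  P set0 -> (forall (A : {set T}) x, x \notin A -> P A -> P (x |: A)) -> forall A, P A.
Proof.
move=> P0 PU1 A; have [n] := ubnP #|A|; elim: n A => // n IH A.
have [->|[x xA]] := set_0Vmem A; first by [].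
rewrite (cardsD1 x A) xA ltnS => An; rewrite -(setD1K xA).
by apply: PU1; [rewrite !inE eqxx | exact: IH].
Qed.

Lemma connect_homo (T1 T2 : finType) (e1 : rel T1) (e2 : rel T2) (h : T1 -> T2) :
  (forall x y, e1 x y -> connect e2 (h x) (h y)) ->
  forall x y, connect e1 x y -> connect e2 (h x) (h y).
Proof.
move=> he x y /connectP[p + ->]; elim: p x => [|z p IH] x /=.
  by move=> _; apply: connect0.
by case/andP=> /he hxz /IH; apply: connect_trans.
Qed.

Lemma cardsU_disjoint (T : finType) (A B : {set T}) :
  [disjoint A & B] -> #|A :|: B| = #|A| + #|B|.
Proof. by move=> dAB; have [_ /eqP] := leq_card_setU A B; rewrite dAB. Qed.

Lemma disjoint_setU (T : finType) (A B C D : {set T}) :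
  [disjoint A & C] -> [disjoint A & D] -> [disjoint B & C] -> [disjoint B & D] ->
  [disjoint A :|: B & C :|: D].
Proof.
rewrite -!setI_eq0 setIUl !setIUr.
by move=> /eqP-> /eqP-> /eqP-> /eqP->; rewrite !setU0.
Qed.

Section Components.
Variables (V E : finType) (ends : E -> V * V).

Local Notation joins := (joins ends).
Local Notation adj := (adj ends).
Local Notation has_cycle := (has_cycle ends).
Local Notation acyclic := (acyclic ends).

Lemma joins_ends e : joins e (ends e).1 (ends e).2.
Proof. by rewrite /joins; case: (ends e) => x y; rewrite eqxx. Qed.

Lemma joins_endsP e x y : joins e x y ->
  ((ends e).1 = x /\ (ends e).2 = y) \/ ((ends e).1 = y /\ (ends e).2 = x).
Proof. by rewrite /joins; case: (ends e) => p q /orP[] /eqP[-> ->]; [left|right]. Qed.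

Lemma adj_ends (T : {set E}) e : e \in T -> adj T (ends e).1 (ends e).2.
Proof. by move=> eT; apply/existsP; exists e; rewrite eT joins_ends. Qed.

Lemma adj_sym (T : {set E}) : symmetric (adj T).
Proof.
move=> x y; apply/existsP/existsP=> -[f /andP[fT jf]]; exists f;
  by rewrite fT /joins orbC.
Qed.

Lemma connect_adj_sym (T : {set E}) : connect_sym (adj T).
Proof. exact: sym_connect_sym (adj_sym T). Qed.

Lemma connect_adj_subset (T T' : {set E}) x y :
  T \subset T' -> connect (adj T) x y -> connect (adj T') x y.
Proof.
move=> sTT'; apply: connect_sub => u w /existsP[f /andP[fT jf]].
by apply/connect1/existsP; exists f; rewrite (subsetP sTT') ?jf.
Qed.

Lemma connect_adjU1 (T : {set E}) e x y :
  let a := (ends e).1 in let b := (ends e).2 in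
  connect (adj (e |: T)) x y =
  [|| connect (adj T) x y, connect (adj T) x a && connect (adj T) b y
    | connect (adj T) x b && connect (adj T) a y].
Proof.
move=> a b; apply/idP/idP.
  case/connectP=> p + ->; elim: p x => [|z p IH] x /=; first by rewrite connect0.
  case/andP=> xz /IH {IH}.
  have [xzT|nxzT] := boolP (adj T x z).
    have cxz := connect1 xzT.
    case/or3P=> [h|/andP[h1 h2]|/andP[h1 h2]].
    - by rewrite (connect_trans cxz h).
    - by rewrite (connect_trans cxz h1) h2 orbT.
    - by rewrite (connect_trans cxz h1) h2 !orbT.
  case/existsP: xz => f /andP[]; rewrite in_setU1 => /orP[/eqP->|fT] jf; last first.
    by case/negP: nxzT; apply/existsP; exists f; rewrite fT.
  case/joins_endsP: jf => [[<- <-]|[<- <-]];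
    by case/or3P=> [->|/andP[_ ->]|/andP[_ ->]]; rewrite ?connect0 ?orbT.
have sT : T \subset e |: T by apply: subsetUr.
have cab : connect (adj (e |: T)) a b by apply/connect1/adj_ends/setU11.
have cba : connect (adj (e |: T)) b a by rewrite connect_adj_sym.
case/or3P=> [|/andP[xa by_]|/andP[xb ay]]; first exact: connect_adj_subset.
  apply: connect_trans (connect_adj_subset sT xa) _.
  exact: connect_trans cab (connect_adj_subset sT by_).
apply: connect_trans (connect_adj_subset sT xb) _.
exact: connect_trans cba (connect_adj_subset sT ay).
Qed.

Definition comp (T : {set E}) x := [set y | connect (adj T) x y].
Definition ncomp (T : {set E}) := #|comp T @: [set: V]|.

Lemma mem_comp (T : {set E}) x : x \in comp T x.
Proof. by rewrite inE connect0. Qed.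

Lemma comp_connect (T : {set E}) x y : connect (adj T) x y -> comp T x = comp T y.
Proof.
move=> cxy; apply/setP=> z; rewrite !inE; apply/idP/idP; last exact: connect_trans.
by apply: connect_trans; rewrite connect_adj_sym.
Qed.

Lemma ncomp0 : ncomp set0 = #|V|.
Proof.
rewrite /ncomp card_in_imset ?cardsT // => x y _ _ cxy.
have : y \in comp set0 x by rewrite cxy mem_comp.
rewrite inE => /connectP[[|z p] /=]; first by move=> _ ->.
by case/andP=> /existsP[f]; rewrite inE.
Qed.

Lemma ncompU1_connect (T : {set E}) e :
  connect (adj T) (ends e).1 (ends e).2 -> ncomp (e |: T) = ncomp T.
Proof.
move=> cab; rewrite /ncomp (@eq_imset _ _ _ (comp T)) // => x; apply/setP=> y.
rewrite !inE connect_adjU1; apply/idP/idP=> [|->] //.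
case/or3P=> [//|/andP[xa by_]|/andP[xb ay]].
  exact: connect_trans xa (connect_trans cab by_).
by apply: connect_trans xb (connect_trans _ ay); rewrite connect_adj_sym.
Qed.

Lemma comp_adjU1 (T : {set E}) e x :
  let a := (ends e).1 in let b := (ends e).2 in
  comp (e |: T) x =
  if (a \in comp T x) || (b \in comp T x) then comp T a :|: comp T b else comp T x.
Proof.
move=> a b; apply/setP=> y; rewrite !inE connect_adjU1 -/a -/b.
have [xa|nxa] /= := boolP (connect (adj T) x a).
  rewrite in_setU -(comp_connect xa) !inE.
  apply/idP/idP=> [/or3P[->|->|/andP[_ ay]]|/orP[->|->]]; rewrite ?orbT //.
  by rewrite (connect_trans xa ay).
have [xb|nxb] /= := boolP (connect (adj T) x b); last by rewrite inE orbF.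
by rewrite in_setU -(comp_connect xb) !inE orbC.
Qed.

Lemma mem_comp_imset (T : {set E}) (A : {set V}) C x :
  C \in comp T @: A -> x \in C -> C = comp T x.
Proof. by case/imsetP=> y _ ->; rewrite inE => /comp_connect. Qed.

Lemma ncompU1_disconnect (T : {set E}) e :
  ~~ connect (adj T) (ends e).1 (ends e).2 -> ncomp T = (ncomp (e |: T)).+1.
Proof.
set a := (ends e).1; set b := (ends e).2 => nab.
set X := comp T @: [set: V]; set Ca := comp T a; set Cb := comp T b.
pose f (C : {set V}) := if (a \in C) || (b \in C) then Ca :|: Cb else C.
have CaX : Ca \in X by apply: imset_f.
have CbX : Cb \in X by apply: imset_f.
have aCb : a \notin Cb by rewrite inE connect_adj_sym.
have CaCb : Ca != Cb by apply/eqP=> CaCb; move: aCb; rewrite -CaCb mem_comp.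
have fCb : f Cb = f Ca by rewrite /f !mem_comp orbT.
have compE : comp (e |: T) @: [set: V] = f @: (X :\ Cb).
  apply/eqP; rewrite eqEsubset; apply/andP; split; apply/subsetP=> _ /imsetP[C CX ->].
    rewrite comp_adjU1 -/a -/b.
    have [->|CCb] := eqVneq (comp T C) Cb.
      by rewrite -/(f Cb) fCb imset_f // !inE CaCb.
    by apply: imset_f; rewrite !inE CCb imset_f.
  case/setD1P: CX => _ /imsetP[x _ ->]; apply/imsetP; exists x => //.
  by rewrite comp_adjU1.
rewrite /ncomp -/X compE card_in_imset; first by rewrite (cardsD1 Cb X) CbX.
have aCa : a \in Ca := mem_comp T a.
move=> C D /setD1P[CCb CX] /setD1P[DCb DX]; rewrite /f.
have hitE B : B \in X -> B != Cb -> (a \in B) || (b \in B) -> B = Ca.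
  move=> BX BCb /orP[] /(mem_comp_imset BX) // BE.
  by rewrite BE eqxx in BCb.
case: ifP => hC; case: ifP => hD.
- by move=> _; rewrite (hitE C) // (hitE D).
- by move=> CD; move: hD; rewrite -CD in_setU aCa.
- by move=> CD; move: hC; rewrite CD in_setU aCa.
- by [].
Qed.

Lemma has_cycle_subset (T T' : {set E}) : T \subset T' -> has_cycle T -> has_cycle T'.
Proof.
move=> sTT' [k [es [vs [ies ivs hes]]]]; exists k, es, vs; split=> // i.
by have [esT jes] := hes i; rewrite (subsetP sTT').
Qed.

Lemma acyclic_subset (T T' : {set E}) : T \subset T' -> acyclic T' -> acyclic T.
Proof. by move=> sTT' acT' /(has_cycle_subset sTT'). Qed.

Lemma has_cycle_connect (T : {set E}) : has_cycle T ->
  exists2 e, e \in T & connect (adj (T :\ e)) (ends e).1 (ends e).2.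
Proof.
case=> k [es [vs [ies _ hes]]]; set e := es ord_max.
exists e; first by case: (hes ord_max).
have walk i : i <= k -> connect (adj (T :\ e)) (vs ord0) (vs (inord i)).
  elim: i => [|i IH] ik.
    by rewrite (_ : inord 0 = ord0) ?connect0 //; apply: val_inj; rewrite /= inordK.
  apply: connect_trans (IH (ltnW ik)) (connect1 _).
  have [esT jes] := hes (inord i).
  have -> : inord i.+1 = ordS (inord i :> 'I_k.+1).
    by apply: val_inj; rewrite /= !inordK ?modn_small ?ltnS ?(ltnW ik).
  apply/existsP; exists (es (inord i)); rewrite !inE esT jes !andbT.
  apply/eqP=> /ies /(congr1 val) /=; rewrite inordK ?ltnS ?(ltnW ik) // => ik_eq.
  by rewrite ik_eq ltnn in ik.
have [_] := hes ord_max; rewrite -/e.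
have -> : ordS ord_max = ord0 :> 'I_k.+1 by apply: val_inj; rewrite /= modnn.
have -> : ord_max = inord k :> 'I_k.+1 by apply: val_inj; rewrite /= inordK.
by case/joins_endsP=> [[-> ->]|[-> ->]]; [rewrite connect_adj_sym|]; apply: walk.
Qed.

Lemma joins_nth_inj (s : seq V) x0 f i j : uniq s ->
  i.+1 < size s -> j.+1 < size s ->
  joins f (nth x0 s i) (nth x0 s i.+1) -> joins f (nth x0 s j) (nth x0 s j.+1) ->
  i = j.
Proof.
move=> us ilt jlt ji jj; have ilt' := ltnW ilt; have jlt' := ltnW jlt.
have nthK m n : m < size s -> n < size s -> nth x0 s m = nth x0 s n -> m = n.
  by move=> ms ns /eqP; rewrite nth_uniq // => /eqP.
case/joins_endsP: ji => [[a1 a2]|[a1 a2]]; case/joins_endsP: jj; rewrite a1 a2.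
- by case=> /nthK ->.
- by case=> /nthK eq1 /nthK eq2; have := eq1 ilt' jlt; have := eq2 ilt jlt'; lia.
- by case=> /nthK eq1 /nthK eq2; have := eq1 ilt jlt'; have := eq2 ilt' jlt; lia.
- by case=> _ /nthK ->.
Qed.

Lemma connect_has_cycleU1 (T : {set E}) e : e \notin T ->
  connect (adj T) (ends e).2 (ends e).1 -> has_cycle (e |: T).
Proof.
set a := (ends e).1; set b := (ends e).2 => eT.
have [ab|nab] := eqVneq a b.
  move=> _; exists 0, (fun _ => e), (fun _ => a).
  split=> [i j _|i j _|i]; rewrite ?(ord1 i) ?(ord1 j) //.
  by rewrite setU11 {2}ab joins_ends.
case/connectP=> p0 p0_path.
case: (shortenP p0_path) => p p_path p_uniq _ lst {p0_path p0}.
set m := size p; pose v i := nth b (b :: p) i.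
have vm : v m = a by rewrite /v lst -last_nth.
pose edge x y := odflt e [pick f in T | joins f x y].
have edgeP i : i < m ->
    edge (v i) (v i.+1) \in T /\ joins (edge (v i) (v i.+1)) (v i) (v i.+1).
  move=> im; have /existsP[f /andP[fT jf]] : adj T (v i) (v i.+1).
    by move/(pathP b): p_path; apply.
  rewrite /edge; case: pickP => [g /andP[]|/(_ f)] //.
  by rewrite fT jf.
pose es (i : 'I_m.+1) := if i < m then edge (v i) (v i.+1) else e.
have lastE (i : 'I_m.+1) : ~~ (i < m) -> i = m :> nat.
  by rewrite -leqNgt => mi; apply/eqP; rewrite eqn_leq mi -ltnS ltn_ord.
exists m, es, (fun i => v i); split.
- move=> i j; rewrite /es; case: ifP => im; case: ifP => jm.
  + move=> eij; apply/val_inj/(joins_nth_inj p_uniq); rewrite /= ?ltnS //.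
      exact: (edgeP i im).2.
    by rewrite eij; exact: (edgeP j jm).2.
  + by move=> eij; have [] := edgeP i im; rewrite eij (negPf eT).
  + by move=> eij; have [] := edgeP j jm; rewrite -eij (negPf eT).
  + by move=> _; apply/val_inj; rewrite /= (lastE i (negbT im)) (lastE j (negbT jm)).
- by move=> i j /eqP; rewrite /v nth_uniq // => /eqP /val_inj.
move=> i; rewrite /es; case: ifP => im.
  have [edgeT edge_joins] := edgeP i im; rewrite setU1r //.
  by rewrite (_ : (ordS i : nat) = i.+1) //= modn_small.
have im' := lastE i (negbT im).
have -> : (ordS i : nat) = 0 by rewrite /= im' modnn.
by rewrite im' setU11 vm joins_ends.
Qed.

Lemma leq_card_ncomp (T : {set E}) : #|V| <= #|T| + ncomp T.
Proof.
elim/setU1_ind: T => [|T e eT IH]; first by rewrite cards0 ncomp0.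
rewrite cardsU1 eT /=.
have [c|nc] := boolP (connect (adj T) (ends e).1 (ends e).2).
  by rewrite ncompU1_connect // -addnA; apply: leq_trans IH (leq_addl _ _).
by move: IH; rewrite (ncompU1_disconnect nc) addnS -add1n addnA.
Qed.

Lemma acyclic_card_ncomp (T : {set E}) : acyclic T -> #|T| + ncomp T = #|V|.
Proof.
elim/setU1_ind: T => [_|T e eT IH acT]; first by rewrite cards0 ncomp0.
have nc : ~~ connect (adj T) (ends e).1 (ends e).2.
  by apply/negP; rewrite connect_adj_sym => /(connect_has_cycleU1 eT).
rewrite cardsU1 eT /= -(IH (acyclic_subset (subsetUr _ _) acT)).
by rewrite (ncompU1_disconnect nc); lia.
Qed.

Lemma has_cycle_card_ncomp (T : {set E}) : has_cycle T -> #|V| < #|T| + ncomp T.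
Proof.
case/has_cycle_connect=> e eT c; rewrite -(setD1K eT) ncompU1_connect //.
by rewrite cardsU1 !inE eqxx /= addSn ltnS leq_card_ncomp.
Qed.

Definition edges_within (VS : {set V}) (T : {set E}) :=
  forall e, e \in T -> (ends e).1 \in VS /\ (ends e).2 \in VS.

Lemma graph_edges_within (VS : {set V}) (ES T : {set E}) :
  is_graph ends VS ES -> T \subset ES -> edges_within VS T.
Proof. by move=> gVSES sTES e /(subsetP sTES) /gVSES[]. Qed.

Section Within.
Variables (VS : {set V}) (T : {set E}).
Hypothesis T_within : edges_within VS T.

Lemma comp_notin x : x \notin VS -> comp T x = [set x].
Proof.
move=> xVS; apply/setP=> y; rewrite !inE; apply/idP/eqP=> [|<-]; last exact: connect0.
case/connectP=> -[|z p] /=; first by move=> _ ->.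
case/andP=> /existsP[f /andP[/T_within[f1 f2] /joins_endsP[[fx _]|[_ fx]]]] _;
  by move: xVS; rewrite -fx ?f1 ?f2.
Qed.

Lemma ncomp_within : ncomp T = #|~: VS| + #|comp T @: VS|.
Proof.
rewrite /ncomp -(setUCr VS) imsetU cardsU addnC.
have -> : (comp T @: VS) :&: (comp T @: ~: VS) = set0.
  apply/setP=> C; rewrite !inE; apply/andP=> -[/imsetP[y yVS ->] /imsetP[x]].
  rewrite inE => xVS; rewrite (comp_notin xVS) => /setP/(_ y).
  by rewrite mem_comp inE => /esym/eqP yx; move: xVS; rewrite -yx yVS.
rewrite cards0 subn0 card_in_imset // => x y; rewrite !inE => xVS yVS.
by rewrite (comp_notin xVS) (comp_notin yVS) => /set1_inj.
Qed.

Lemma acyclic_card_comps : acyclic T -> #|T| + #|comp T @: VS| = #|VS|.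
Proof.
move/acyclic_card_ncomp; rewrite ncomp_within.
by have := cardsC VS; lia.
Qed.

Lemma has_cycle_card_comps : has_cycle T -> #|VS| < #|T| + #|comp T @: VS|.
Proof.
move/has_cycle_card_ncomp; rewrite ncomp_within.
by have := cardsC VS; lia.
Qed.

Lemma connectedE : VS != set0 -> connected ends VS T <-> #|comp T @: VS| = 1.
Proof.
move=> VSn0; split=> [[_ cT]|/eqP/cards1P[C0 compsE]].
  case/set0Pn: VSn0 => x0 x0VS; apply/eqP/cards1P; exists (comp T x0).
  apply/setP=> C; rewrite !inE; apply/imsetP/eqP=> [[y yVS ->]|->]; last by exists x0.
  by apply/esym/comp_connect/cT.
split=> // x y xVS yVS.
have /[!(compsE, inE)] /eqP xC0 : comp T x \in comp T @: VS by apply: imset_f.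
have /[!(compsE, inE)] /eqP yC0 : comp T y \in comp T @: VS by apply: imset_f.
by have := mem_comp T y; rewrite yC0 -xC0 inE.
Qed.

Lemma connected_acyclic_card : connected ends VS T -> acyclic T -> #|T|.+1 = #|VS|.
Proof.
by move=> cT /acyclic_card_comps; rewrite (connectedE (proj1 cT)).1 // addn1.
Qed.

Lemma acyclic_card_lt : VS != set0 -> acyclic T -> #|T| < #|VS|.
Proof.
move=> VSn0 /acyclic_card_comps <-.
by rewrite -addn1 leq_add2l card_gt0 imset_eq0.
Qed.

Lemma acyclic_card_connected :
  VS != set0 -> acyclic T -> #|T|.+1 = #|VS| -> connected ends VS T.
Proof.
move=> VSn0 /acyclic_card_comps <- /eqP; rewrite -addn1 eqn_add2l => /eqP.
by move/esym/(connectedE VSn0).2.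
Qed.

Lemma connected_card_acyclic : connected ends VS T -> #|T| < #|VS| -> acyclic T.
Proof.
move=> cT ltTVS /has_cycle_card_comps; rewrite (connectedE (proj1 cT)).1 // addn1.
by rewrite ltnNge ltTVS.
Qed.

End Within.

Lemma spanning_tree_card (VS : {set V}) (ES T : {set E}) :
  is_graph ends VS ES -> spanning_tree ends VS ES T -> #|T|.+1 = #|VS|.
Proof.
move=> gG [sTES cT acT].
exact: connected_acyclic_card (graph_edges_within gG sTES) cT acT.
Qed.

Lemma bispanning_acyclic_partition (VS : {set V}) (ES A B : {set E}) :
  bispanning ends VS ES -> [disjoint A & B] -> A :|: B = ES ->
  acyclic A -> acyclic B -> spanning_tree ends VS ES A /\ spanning_tree ends VS ES B.
Proof.
move=> [gG [S0 [T0 [tS0 tT0 dS0T0 uS0T0]]]] dAB uAB acA acB.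
have VSn0 : VS != set0 by case: tS0 => _ [].
have sAES : A \subset ES by rewrite -uAB subsetUl.
have sBES : B \subset ES by rewrite -uAB subsetUr.
have wA := graph_edges_within gG sAES; have wB := graph_edges_within gG sBES.
have ltA := acyclic_card_lt wA VSn0 acA; have ltB := acyclic_card_lt wB VSn0 acB.
have cardE : #|A| + #|B| = #|S0| + #|T0| by rewrite -!cardsU_disjoint // uAB uS0T0.
have cS0 := spanning_tree_card gG tS0; have cT0 := spanning_tree_card gG tT0.
have cA : #|A|.+1 = #|VS| by lia.
have cB : #|B|.+1 = #|VS| by lia.
split; split=> //; exact: acyclic_card_connected.
Qed.

End Components.

Section Contraction.
Variables (V E : finType) (ends : E -> V * V) (VS : {set V}) (ES : {set E}).
Variable V' : {set V}.
Hypothesis sV'VS : V' \subset VS.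

Local Notation cv := (cvert V').
Local Notation ce := (cends ends V').
Local Notation CV := (cverts V' VS).
Local Notation CE := (cedges ends V' ES).

Lemma cvert_in x : x \in VS -> cv x \in CV.
Proof.
move=> xVS; rewrite /cvert /cverts; case: ifP => xV'; first exact: setU11.
by rewrite setU1r // imset_f // !inE xV' xVS.
Qed.

Lemma cvertsP u : V' != set0 -> u \in CV -> exists2 x, x \in VS & cv x = u.
Proof.
case/set0Pn=> x0 x0V'; rewrite !inE => /orP[/eqP->|/imsetP[x]].
  by exists x0; [exact: (subsetP sV'VS) | rewrite /cvert x0V'].
by rewrite !inE => /andP[xV' xVS] ->; exists x; rewrite // /cvert (negPf xV').
Qed.

Lemma card_cverts : #|CV| = (#|VS| - #|V'|).+1.
Proof.
rewrite /cverts cardsU1 card_imset; last by move=> x y [].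
rewrite cardsD (setIidPr sV'VS); suff -> : None \notin Some @: (VS :\: V') by [].
by apply/imsetP=> -[].
Qed.

Lemma in_cedges e :
  e \in CE = (e \in ES) && ~~ (((ends e).1 \in V') && ((ends e).2 \in V')).
Proof. by rewrite !inE andbC. Qed.

Lemma cedges_within (T : {set E}) :
  is_graph ends VS ES -> T \subset CE -> edges_within ce CV T.
Proof.
move=> gVSES sTCE e /(subsetP sTCE); rewrite in_cedges => /andP[/gVSES[e1 e2 _] _].
by split; apply: cvert_in.
Qed.

Lemma connect_cvert (T : {set E}) x y : T \subset ES ->
  connect (adj ends T) x y -> connect (adj ce (T :&: CE)) (cv x) (cv y).
Proof.
move=> sTES; apply: connect_homo => {}x {}y /existsP[f /andP[fT jf]].
have [xV'|nxV'] := boolP (x \in V'); have [yV'|nyV'] := boolP (y \in V').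
- by rewrite /cvert xV' yV' connect0.
all: apply/connect1/existsP; exists f; rewrite inE fT in_cedges (subsetP sTES) //=.
all: case/joins_endsP: jf => -[f1 f2]; rewrite /joins /cends f1 f2 /cvert.
all: by rewrite ?xV' ?yV' ?(negPf nxV') ?(negPf nyV') /= ?eqxx ?orbT.
Qed.

Lemma connect_odflt_cvert (S' T : {set E}) v0 x :
  v0 \in V' -> connected ends V' S' -> S' \subset T ->
  connect (adj ends T) (odflt v0 (cv x)) x.
Proof.
move=> v0V' [_ cS'] sS'T; rewrite /cvert; case: ifP => xV' /=; last exact: connect0.
exact: connect_adj_subset sS'T (cS' _ _ v0V' xV').
Qed.

Lemma connect_lift_cverts (S' Sb : {set E}) v0 :
  v0 \in V' -> connected ends V' S' -> Sb \subset CE ->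
  forall u w, connect (adj ce Sb) u w ->
  connect (adj ends (S' :|: Sb)) (odflt v0 u) (odflt v0 w).
Proof.
move=> v0V' cS' sSbCE; apply: connect_homo => u w /existsP[f /andP[fSb jf]].
have to_cvert x := connect_odflt_cvert x v0V' cS' (subsetUl S' Sb).
have f12 : connect (adj ends (S' :|: Sb)) (ends f).1 (ends f).2.
  by apply/connect1/adj_ends; rewrite inE fSb orbT.
have lift_f : connect (adj ends (S' :|: Sb))
    (odflt v0 (cv (ends f).1)) (odflt v0 (cv (ends f).2)).
  by apply: connect_trans (to_cvert _) (connect_trans f12 _); rewrite connect_adj_sym.
by case/joins_endsP: jf => -[<- <-] //; rewrite connect_adj_sym.
Qed.

End Contraction.

Section SubgraphContraction.
Variables (V E : finType) (ends : E -> V * V).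
Variables (VS : {set V}) (ES : {set E}) (V' : {set V}) (E' : {set E}).
Hypotheses (gG : is_graph ends VS ES) (gG' : is_graph ends V' E').
Hypotheses (sV'VS : V' \subset VS) (sE'ES : E' \subset ES).

Local Notation ce := (cends ends V').
Local Notation CV := (cverts V' VS).
Local Notation CE := (cedges ends V' ES).

Lemma disjoint_cedges : [disjoint E' & CE].
Proof.
rewrite -setI_eq0; apply/eqP/setP=> e; rewrite !inE.
by apply/negbTE; apply/andP=> -[/gG'[-> -> _]].
Qed.

Lemma spanning_tree_setI_cedges (S : {set E}) :
  spanning_tree ends VS ES S -> spanning_tree ends V' E' (S :&: E') ->
  spanning_tree ce CV CE (S :&: CE).
Proof.
move=> tS tSE'; have [sSES _ acS] := tS; have [_ [V'n0 cSE'] _] := tSE'.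
have SCE : S :&: CE = S :\: E'.
  apply/setP=> e; rewrite in_setI in_setD in_cedges.
  have [eS|] := boolP (e \in S); rewrite ?andbF //= (subsetP sSES) //=.
  have [/gG'[-> -> _] //|eE'] := boolP (e \in E').
  apply/negP=> /andP[e1 e2]; apply: acS.
  apply: has_cycle_subset (connect_has_cycleU1 _ (cSE' _ _ e2 e1)).
    by rewrite subUset sub1set eS subsetIl.
  by rewrite inE (negPf eE') andbF.
have cardSCE : #|S :&: CE| < #|CV|.
  rewrite SCE cardsD card_cverts //.
  have := spanning_tree_card gG tS; have := spanning_tree_card gG' tSE'.
  by have := subset_leq_card sV'VS; lia.
have cCV : connected ce CV (S :&: CE).
  split=> [|u w /(cvertsP sV'VS V'n0)[x xVS <-] /(cvertsP sV'VS V'n0)[y yVS <-]].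
    by apply/set0Pn; exists None; rewrite setU11.
  by apply: connect_cvert sSES _; case: tS => _ [_ ->].
split=> //; first exact: subsetIr.
exact: connected_card_acyclic (cedges_within gG (subsetIr _ _)) cCV cardSCE.
Qed.

Lemma spanning_tree_setU_cedges (S' Sb : {set E}) :
  spanning_tree ends V' E' S' -> spanning_tree ce CV CE Sb ->
  spanning_tree ends VS ES (S' :|: Sb).
Proof.
move=> tS' tSb; have [sS'E' cS'V' _] := tS'; have [sSbCE cSbCV acSb] := tSb.
have [V'n0 _] := cS'V'; have [_ cSb] := cSbCV.
have dS'Sb : [disjoint S' & Sb] := disjointW sS'E' sSbCE disjoint_cedges.
have sUES : S' :|: Sb \subset ES.
  by rewrite subUset (subset_trans sS'E') // (subset_trans sSbCE) ?subsetDl.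
have [v0 v0V'] := set0Pn _ V'n0.
have cU : connected ends VS (S' :|: Sb).
  split=> [|x y xVS yVS].
    by apply/set0Pn; exists v0; apply: (subsetP sV'VS).
  have to_cvert z := connect_odflt_cvert z v0V' cS'V' (subsetUl S' Sb).
  have cxy := connect_lift_cverts v0V' cS'V' sSbCE
    (cSb _ _ (cvert_in V' xVS) (cvert_in V' yVS)).
  apply: connect_trans (connect_trans _ cxy) (to_cvert y).
  by rewrite connect_adj_sym to_cvert.
split=> //.
apply: connected_card_acyclic (graph_edges_within gG sUES) cU _.
rewrite cardsU_disjoint //.
have := spanning_tree_card gG' tS'.
have := connected_acyclic_card (cedges_within gG sSbCE) cSbCV acSb.
by rewrite card_cverts //; have := subset_leq_card sV'VS; lia.
Qed.

End SubgraphContraction.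

Theorem mainTheorem18 (V E : finType) (ends : E -> V * V)
    (VS : {set V}) (ES : {set E}) (V' : {set V}) (E' : {set E}) :
  bispanning ends VS ES ->
  V' \subset VS -> E' \subset ES ->
  bispanning ends V' E' ->
  (* (i) *)
  (forall S T : {set E},
     spanning_tree ends VS ES S -> spanning_tree ends VS ES T ->
     [disjoint S & T] -> S :|: T = ES ->
     [/\ spanning_tree ends V' E' (S :&: E'),
         spanning_tree ends V' E' (T :&: E') &
         [disjoint S :&: E' & T :&: E']] /\
     [/\ spanning_tree (cends ends V') (cverts V' VS) (cedges ends V' ES)
           (S :&: cedges ends V' ES),
         spanning_tree (cends ends V') (cverts V' VS) (cedges ends V' ES)
           (T :&: cedges ends V' ES) &
         [disjoint S :&: cedges ends V' ES & T :&: cedges ends V' ES]])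
  /\
  (* (ii) *)
  (forall S' T' Sb Tb : {set E},
     spanning_tree ends V' E' S' -> spanning_tree ends V' E' T' ->
     [disjoint S' & T'] ->
     spanning_tree (cends ends V') (cverts V' VS) (cedges ends V' ES) Sb ->
     spanning_tree (cends ends V') (cverts V' VS) (cedges ends V' ES) Tb ->
     [disjoint Sb & Tb] ->
     [/\ [disjoint S' & Sb], [disjoint T' & Tb],
         spanning_tree ends VS ES (S' :|: Sb),
         spanning_tree ends VS ES (T' :|: Tb) &
         [disjoint S' :|: Sb & T' :|: Tb]]).
Proof.
move=> [gG _] sV'VS sE'ES bG'; have gG' := bG'.1.
have dE'CE : [disjoint E' & cedges ends V' ES] by apply: disjoint_cedges.
split=> [S T tS tT dST uST | S' T' Sb Tb tS' tT' dS'T' tSb tTb dSbTb].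
- have dI X : [disjoint S :&: X & T :&: X] by apply: disjointW dST; apply: subsetIl.
  have [tSE' tTE'] :
      spanning_tree ends V' E' (S :&: E') /\ spanning_tree ends V' E' (T :&: E').
    apply: bispanning_acyclic_partition bG' (dI E') _ _ _.
    + by rewrite -setIUl uST (setIidPr sE'ES).
    + by case: tS => _ _; apply: acyclic_subset (subsetIl _ _).
    + by case: tT => _ _; apply: acyclic_subset (subsetIl _ _).
  split; split; rewrite ?dI //.
  + exact: spanning_tree_setI_cedges tS tSE'.
  + exact: spanning_tree_setI_cedges tT tTE'.
- have [sS'E' _ _] := tS'; have [sT'E' _ _] := tT'.
  have [sSbCE _ _] := tSb; have [sTbCE _ _] := tTb.
  have dE'CE' : [disjoint cedges ends V' ES & E'] by rewrite disjoint_sym.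
  split.
  + exact: disjointW sS'E' sSbCE dE'CE.
  + exact: disjointW sT'E' sTbCE dE'CE.
  + exact: spanning_tree_setU_cedges tS' tSb.
  + exact: spanning_tree_setU_cedges tT' tTb.
  + by rewrite disjoint_setU ?(disjointW sS'E' sTbCE) ?(disjointW sSbCE sT'E').
Qed.
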